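(* Let $\sigma:\mathbb{Z}^2\times\mathbb{Z}^2\to U(1)$ be $\sigma((n,m),(n',m'))=\exp(-2\pi i(\xi_1 nm'+\xi_2 mn'))$ with $\xi_2=\theta/2=-\xi_1$. Then the map $\tilde\sigma:(\mathbb{Z}^2\rtimes_{\varphi_\epsilon}\mathbb{Z})\times(\mathbb{Z}^2\rtimes_{\varphi_\epsilon}\mathbb{Z})\to U(1)$, $$\tilde\sigma((n,m,k),(n',m',k')) := \sigma\big((n,m),(n',m')\varphi_\epsilon^k\big),$$ is a multiplier on the group $\mathbb{Z}^2\rtimes_{\varphi_\epsilon}\mathbb{Z}$.
   Context: Let $\mathbb{K}$ be a real quadratic field, $\theta\in\mathbb{K}\setminus\mathbb{Q}$ (regarded as a real number via a fixed real embedding), and let $\epsilon$ be a totally positive unit of $\mathbb{K}$ with $\epsilon(\mathbb{Z}+\mathbb{Z}\theta)=\mathbb{Z}+\mathbb{Z}\theta$. Write $\epsilon=a+b\theta$ and $\epsilon\theta=c+d\theta$ with $a,b,c,d\in\mathbb{Z}$ and set $\varphi_\epsilon=\begin{pmatrix}a&b\\c&d\end{pmatrix}$, which lies in $\mathrm{SL}_2(\mathbb{Z})$. The group $\mathbb{Z}^2\rtimes_{\varphi_\epsilon}\mathbb{Z}$ consists of triples $(n,m,k)$, with elements of $\mathbb{Z}^2$ written as row vectors, and product $((n,m),k)\cdot((n',m'),k')=((n,m)+(n',m')\varphi_\epsilon^k,\,k+k')$. A multiplier on a discrete group $\Gamma$ is a map $\sigma:\Gamma\times\Gamma\to U(1)$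 satisfying $\sigma(\gamma_1,\gamma_2)\sigma(\gamma_1\gamma_2,\gamma_3)=\sigma(\gamma_1,\gamma_2\gamma_3)\sigma(\gamma_2,\gamma_3)$ and $\sigma(\gamma,1)=\sigma(1,\gamma)=1$. *)

From HB Require Import structures.
From mathcomp Require Import all_boot all_order all_algebra.
From mathcomp Require Import all_classical all_reals.
From mathcomp Require Import trigo.
From mathcomp Require Import complex.
Set Implicit Arguments. Unset Strict Implicit. Unset Printing Implicit Defensive.
Import Order.TTheory GRing.Theory Num.Theory.
Local Open Scope ring_scope.
Local Open Scope complex_scope.

Section QuadField.
Variable R : realType.

Definition is_rational (x : R) : Prop := exists q : rat, x = ratr q.

Definition in_Qtheta (theta x : R) : Prop :=
  exists p q : rat, x = ratr p + ratr q * theta.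

(* theta generates a real quadratic field K = Q(theta) (inside R via the
   fixed real embedding): theta is irrational and of degree 2 over Q *)
Definition real_quadratic_generator (theta : R) : Prop :=
  ~ is_rational theta /\ in_Qtheta theta (theta ^+ 2).

(* Galois conjugate of x = p + q theta in Q(theta): if theta^2 = s + t theta
   then the other root of X^2 - tX - s is t - theta *)
Definition galois_conj (theta x : R) : R -> Prop := fun y =>
  exists s t p q : rat, theta ^+ 2 = ratr s + ratr t * theta /\
    x = ratr p + ratr q * theta /\ y = ratr p + ratr q * (ratr t - theta).

Definition alg_integer (x : R) : Prop :=
  exists p : {poly int}, p \is monic /\ root (map_poly intr p) x.

Definition is_unit_OK (theta e : R) : Prop :=
  in_Qtheta theta e /\ e != 0 /\ alg_integer e /\ alg_integer e^-1.

Definition totally_positive (theta e : R) : Prop :=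
  0 < e /\ forall e', galois_conj theta e e' -> 0 < e'.

Definition in_lattice (theta x : R) : Prop :=
  exists n m : int, x = n%:~R + m%:~R * theta.

Definition stabilizes_lattice (theta e : R) : Prop :=
  forall x, in_lattice theta x <-> exists y, in_lattice theta y /\ x = e * y.

End QuadField.

Definition phimx (a b c d : int) : 'M[int]_2 :=
  \matrix_(i < 2, j < 2)
    (if i == 0 then (if j == 0 then a else b) else (if j == 0 then c else d)).

Definition sdgrp := ('rV[int]_2 * int)%type.

Definition sdmul (phi : 'M[int]_2) (g h : sdgrp) : sdgrp :=
  (g.1 + h.1 *m (phi ^ g.2), g.2 + h.2).

Definition sdone : sdgrp := (0, 0).

Definition expi (R : realType) (t : R) : R[i] := (cos t) +i* (sin t).

Definition is_multiplier (R : realType) (G : Type) (mul : G -> G -> G) (one : G)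
    (s : G -> G -> R[i]) : Prop :=
  (forall g h, `|s g h| = 1) /\
  (forall g1 g2 g3, s g1 g2 * s (mul g1 g2) g3 = s g1 (mul g2 g3) * s g2 g3) /\
  (forall g, s g one = 1 /\ s one g = 1).

Definition sigma2 (R : realType) (xi1 xi2 : R) (x y : 'rV[int]_2) : R[i] :=
  expi (- (2 * pi) * (xi1 * (x 0 0)%:~R * (y 0 1)%:~R
                      + xi2 * (x 0 1)%:~R * (y 0 0)%:~R)).

Definition sigma_tilde (R : realType) (xi1 xi2 : R) (phi : 'M[int]_2)
    (g h : sdgrp) : R[i] :=
  sigma2 xi1 xi2 g.1 (h.1 *m (phi ^ g.2)).

From HB Require Import structures.
From mathcomp Require Import all_boot all_order all_algebra.
From mathcomp Require Import all_classical all_reals.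
From mathcomp Require Import trigo complex.
From mathcomp Require Import ring lra zify.
Import Order.TTheory GRing.Theory Num.Theory.
Set Implicit Arguments. Unset Strict Implicit. Unset Printing Implicit Defensive.
Local Open Scope ring_scope.

(* Writing xi for theta/2, sigma(x, y) = exp(2 pi i xi w(x, y)) where
   w(x, y) = det [x; y] is the standard symplectic form on Z^2.  It is
   bilinear and satisfies w(x M, y M) = det M * w(x, y), so when det phi = 1
   the cocycle identity for the twisted sigma reduces to bilinearity of w and
   invariance under phi^k.  Finally det phi_eps is the norm of eps: positive
   because eps is totally positive, and a unit of Z because eps^-1 also
   preserves the lattice Z + Z theta; hence det phi_eps = 1. *)

Lemma det_mx22 (R : comPzRingType) (A : 'M[R]_2) : \det A = A 0 0 * A 1 1 - A 0 1 * A 1 0.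
Proof.
rewrite (expand_det_row _ 0) !big_ord_recl big_ord0 /cofactor !det_mx11 !mxE /=.
rewrite !expr0 !expr1 addr0 !mul1r mulN1r mulrN.
by congr (A _ _ * A _ _ - A _ _ * A _ _); apply: val_inj.
Qed.

Lemma det_exprz (R : comUnitRingType) n (M : 'M[R]_n.+1) (k : int) :
  \det M = 1 -> \det (M ^ k) = 1.
Proof.
have detX m : \det (M ^+ m) = \det M ^+ m.
  by elim: m => [|m IH]; rewrite ?det1 // !exprS detM IH.
by move=> M1; case: k => m; rewrite /exprz ?detV detX M1 expr1n ?invr1.
Qed.

Section Symplectic.
Variable R : comPzRingType.
Implicit Types x y z : 'rV[R]_2.

Definition symp x y : R := \det (col_mx x y).

Lemma sympE x y : symp x y = x 0 0 * y 0 1 - x 0 1 * y 0 0.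
Proof.
rewrite /symp det_mx22 !mxE.
have -> : fintype.split (0 : 'I_(1 + 1)) = inl ord0.
  by case: splitP => j /= hj; [congr inl; apply: val_inj; rewrite ord1 | lia].
have -> : fintype.split (1 : 'I_(1 + 1)) = inr ord0.
  by case: splitP => j /= hj; [move: (ltn_ord j); lia | congr inr; apply: val_inj; rewrite ord1].
by [].
Qed.

Lemma symp_mulmx x y (M : 'M[R]_2) : symp (x *m M) (y *m M) = \det M * symp x y.
Proof. by rewrite /symp -mul_col_mx det_mulmx mulrC. Qed.

Lemma sympDl x y z : symp (x + y) z = symp x z + symp y z.
Proof. rewrite !sympE !mxE; ring. Qed.

Lemma sympDr x y z : symp x (y + z) = symp x y + symp x z.
Proof. rewrite !sympE !mxE; ring. Qed.

Lemma symp0l y : symp 0 y = 0.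
Proof. by rewrite sympE !mxE !mul0r subr0. Qed.

Lemma symp0r x : symp x 0 = 0.
Proof. by rewrite sympE !mxE !mulr0 subr0. Qed.

End Symplectic.

Section ExpI.
Variable R : realType.
Implicit Types t u : R.

Lemma expiD t u : expi (t + u) = expi t * expi u.
Proof.
rewrite /expi cosD sinD; apply/eqP; rewrite eq_complex /=.
by apply/andP; split; apply/eqP; ring.
Qed.

Lemma expi0 : expi (0 : R) = 1.
Proof. by rewrite /expi cos0 sin0. Qed.

Lemma norm_expi t : `|expi t| = 1.
Proof. by rewrite normc_def /= cos2Dsin2 sqrtr1. Qed.

End ExpI.

Lemma sigma_tildeE (R : realType) (xi : R) phi g h :
  sigma_tilde (- xi) xi phi g h = expi (2 * pi * xi * (symp g.1 (h.1 *m phi ^ g.2))%:~R).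
Proof. by rewrite /sigma_tilde /sigma2 sympE; congr expi; rewrite rmorphB !rmorphM /=; ring. Qed.

Lemma sigma_tilde_multiplier (R : realType) (xi : R) (phi : 'M[int]_2) :
  \det phi = 1 -> is_multiplier (sdmul phi) sdone (sigma_tilde (- xi) xi phi).
Proof.
move=> phi1; split; [|split].
- by move=> g h; rewrite sigma_tildeE norm_expi.
- move=> [x1 k1] [x2 k2] [x3 k3]; rewrite !sigma_tildeE /= -!expiD -!mulrDr -!rmorphD.
  rewrite (addrC k1) exprzDr ?unitmxE ?phi1 ?unitr1 // -mulmxE mulmxA.
  rewrite !(mulmxDl, sympDl, sympDr) symp_mulmx det_exprz // mul1r.
  by congr (expi (_ * _%:~R)); ring.
- by move=> [x k]; rewrite !sigma_tildeE /= mul0mx symp0l symp0r !mulr0 expi0.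
Qed.

Section QuadraticUnit.
Variables (R : realType) (theta : R).
Hypothesis theta_irr : ~ is_rational theta.

Lemma ratr_coord_inj (u1 v1 u2 v2 : rat) :
  ratr u1 + ratr v1 * theta = ratr u2 + ratr v2 * theta -> u1 = u2 /\ v1 = v2.
Proof.
move=> e; have [v12|nv12] := eqVneq v1 v2.
  by move: e; rewrite v12 => /addIr /fmorph_inj.
exfalso; apply: theta_irr; exists ((u2 - u1) / (v1 - v2)).
have v12 : ratr (v1 - v2) != 0 :> R by rewrite fmorph_eq0 subr_eq0.
by rewrite fmorph_div /= -(mulfK v12 theta) rmorphB rmorphB /=; congr (_ / _); lra.
Qed.

Lemma intr_coord_inj (u1 v1 u2 v2 : int) :
  u1%:~R + v1%:~R * theta = u2%:~R + v2%:~R * theta -> u1 = u2 /\ v1 = v2.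
Proof.
by rewrite -!(ratr_int R) => /ratr_coord_inj [/intr_inj -> /intr_inj ->].
Qed.

Variables (eps : R) (a b c d : int).
Hypotheses (epsE : eps = a%:~R + b%:~R * theta)
  (eps_thetaE : eps * theta = c%:~R + d%:~R * theta).

Lemma eps_mul_lattice (p q : int) :
  eps * (p%:~R + q%:~R * theta) = (p * a + q * c)%:~R + (p * b + q * d)%:~R * theta.
Proof.
transitivity (p%:~R * eps + q%:~R * (eps * theta)); first by ring.
by rewrite eps_thetaE epsE !rmorphD !rmorphM /=; ring.
Qed.

Lemma det_phimx_unit : stabilizes_lattice theta eps -> \det (phimx a b c d) \is a GRing.unit.
Proof.
move=> stab.
have row_preimage (u v : int) : exists p q : int, p * a + q * c = u /\ p * b + q * d = v.
  have [_ [[p [q ->]]]] := (stab (u%:~R + v%:~R * theta)).1 (ex_intro _ u (ex_intro _ v erefl)).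
  by rewrite eps_mul_lattice => /intr_coord_inj [-> ->]; exists p, q.
have [p1 [q1 [e11 e12]]] := row_preimage 1 0.
have [p2 [q2 [e21 e22]]] := row_preimage 0 1.
apply/unitrPr; exists (p1 * q2 - q1 * p2); rewrite det_mx22 !mxE /=.
transitivity ((p1 * a + q1 * c) * (p2 * b + q2 * d) - (p1 * b + q1 * d) * (p2 * a + q2 * c)).
  by ring.
by rewrite e11 e12 e21 e22 mulr1 mul0r subr0.
Qed.

(* phimx a b c d is the matrix of multiplication by eps in the basis (1, theta),
   so its determinant is the norm of eps, i.e. eps times its Galois conjugate. *)
Lemma det_phimx_norm (s t : rat) : theta ^+ 2 = ratr s + ratr t * theta ->
  eps * (a%:~R + b%:~R * (ratr t - theta)) = (\det (phimx a b c d))%:~R.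
Proof.
move=> theta2.
have [cE dE] : c%:~R = b%:~R * s /\ d%:~R = a%:~R + b%:~R * t.
  apply: ratr_coord_inj; rewrite !(rmorphD, rmorphM) /= !ratr_int -eps_thetaE epsE.
  by rewrite mulrDl -mulrA -expr2 theta2; ring.
have cR := congr1 (ratr : rat -> R) cE; have dR := congr1 (ratr : rat -> R) dE.
rewrite !(rmorphD, rmorphM) /= !ratr_int in cR dR.
rewrite det_mx22 !mxE /= rmorphB !rmorphM /= cR dR epsE.
have -> : ratr s = theta ^+ 2 - ratr t * theta by rewrite theta2; ring.
by ring.
Qed.

End QuadraticUnit.

Lemma det_phimx_eq1 (R : realType) (theta eps : R) (a b c d : int) :
  real_quadratic_generator theta -> totally_positive theta eps ->
  stabilizes_lattice theta eps ->
  eps = a%:~R + b%:~R * theta -> eps * theta = c%:~R + d%:~R * theta ->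
  \det (phimx a b c d) = 1.
Proof.
move=> [irr [s [t theta2]]] [eps_gt0 conj_gt0] stab epsE eps_thetaE.
have conj_eps_gt0 : 0 < a%:~R + b%:~R * (ratr t - theta) :> R.
  by apply: conj_gt0; exists s, t, a%:~R, b%:~R; rewrite !ratr_int.
have det_gt0 : 0 < \det (phimx a b c d).
  rewrite -(ltr0z R) -(det_phimx_norm irr epsE eps_thetaE theta2).
  exact: mulr_gt0.
have /orP [/eqP // | /eqP det_N1] := det_phimx_unit irr epsE eps_thetaE stab.
by rewrite det_N1 in det_gt0.
Qed.

Theorem lemma4p3 (R : realType) (theta eps : R) (a b c d : int) :
  real_quadratic_generator theta ->
  is_unit_OK theta eps ->
  totally_positive theta eps ->
  stabilizes_lattice theta eps ->
  eps = a%:~R + b%:~R * theta ->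
  eps * theta = c%:~R + d%:~R * theta ->
  is_multiplier (sdmul (phimx a b c d)) sdone
    (sigma_tilde (- (theta / 2)) (theta / 2) (phimx a b c d)).
Proof.
move=> quad _ eps_pos stab epsE eps_thetaE.
exact/sigma_tilde_multiplier/(det_phimx_eq1 quad eps_pos stab epsE eps_thetaE).
Qed.
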